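(* Equivalence $\sim$ of extremal assignments of order $n$ is an equivalence relation, i.e. it is reflexive, symmetric and transitive.
   Context: Let $n\ge 3$ and $[n]=\{1,\dots,n\}$. A stable $n$-labeled tree is a finite tree with exactly $n$ leaves, labeled bijectively by $[n]$, in which every non-leaf (internal) vertex has degree at least 3. $V(G)$ denotes the set of internal vertices of $G$, and $S(n)$ the set of stable $n$-labeled trees (up to label-preserving isomorphism). We write $G\rightsquigarrow G'$ ($G'$ is a contraction of $G$) if $G'$ is obtained from $G$ by collapsing connected sets of internal vertices (together with the edges among them) to single vertices; this induces a surjection $\pi:V(G)\to V(G')$, and we write $\{v_1,\dots,v_k\}\rightsquigarrow v'$ when $\pi^{-1}(v')=\{v_1,\dots,v_k\}$. An extremal assignment of order $n$ is a rule $Z$ assigning to every $G\in S(n)$ a subset $Z(G)\subset V(G)$ such that (a) $Z(G)\neq V(G)$ for all $G$, and (b) whenever $G\rightsquigarrow G'$ and $\{v_1,\dots,v_k\}\rightsquigarrow v'$, we have $v'\in Z(G')$ if and only if $v_1,\dots,v_k\in Z(G)$. For $W\subset V(G)$, a vertex $v\in W$ is isolated (in $W$) if no vertex adjacent to $v$ lies in $W$. Two extremal assignments $Z_1,Z_2$ of order $n$ are equivalent, $Z_1\sim Z_2$, if for every $G\in S(n)$ each vertex of $Z_1(G)\setminus Z_2(G)$ is a vertex of degree 3 that is isolated in $Z_1(G)\setminus Z_2(G)$, and likewise each vertex of $Z_2(G)\setminus Z_1(G)$ is of degree 3 and isolated in $Z_2(G)\setminus Z_1(G)$. *)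

From mathcomp Require Import all_boot.
Set Implicit Arguments. Unset Strict Implicit. Unset Printing Implicit Defensive.

(* Vertices of a tree with n leaves and m internal vertices:
   leaves are  inl i  (i : 'I_n, leaf labelled i+1),
   internal vertices are  inr j  (j : 'I_m). *)
Definition vtx (n m : nat) : finType := ('I_n + 'I_m)%type.

(* A stable n-labelled tree.  A (finite simple) tree is a connected graph
   with |E| = |V| - 1; edges counted as ordered pairs, hence the doubling. *)
Record stree (n : nat) : Type := STree {
  nint : nat;
  sadj : rel (vtx n nint);
  sadj_sym : forall x y, sadj x y = sadj y x;
  sadj_irr : forall x, ~~ sadj x x;
  s_connected : forall x y, connect sadj x y;
  s_edges : #|[set p : vtx n nint * vtx n nint | sadj p.1 p.2]|
            = (#|vtx n nint|).-1.*2;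
  s_leaf_deg : forall i : 'I_n, #|[set y | sadj (inl i) y]| = 1;
  s_int_deg : forall j : 'I_nint, 3 <= #|[set y | sadj (inr j) y]|
}.

Definition V n (G : stree n) : finType := 'I_(nint G).

Definition deg n (G : stree n) (v : V G) : nat := #|[set y | @sadj n G (inr v) y]|.

Definition iadj n (G : stree n) : rel (V G) := fun u v => @sadj n G (inr u) (inr v).

Definition vext n (G G' : stree n) (pi : V G -> V G') (x : vtx n (nint G))
  : vtx n (nint G') :=
  match x with inl i => inl i | inr j => inr (pi j) end.

(* G ~> G' via pi : V(G) -> V(G'): G' is obtained by collapsing the connected
   sets of internal vertices pi^-1(v') (v' in V(G')) to single vertices, with
   the edges among them. *)
Definition contraction n (G G' : stree n) (pi : V G -> V G') : Prop :=
  [/\ (forall v' : V G', exists v : V G, pi v = v'),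
      (forall a b : V G, pi a = pi b ->
         connect (fun x y => [&& iadj x y, pi x == pi a & pi y == pi a]) a b) &
      (forall x' y' : vtx n (nint G'),
         @sadj n G' x' y' =
         (x' != y') && [exists x, exists y, [&& vext pi x == x', vext pi y == y'
                                              & @sadj n G x y]])].

Definition assignment n := forall G : stree n, {set V G}.

Definition extremal n (Z : assignment n) : Prop :=
  (forall G : stree n, Z G != [set: V G]) /\
  (forall (G G' : stree n) (pi : V G -> V G'), contraction pi ->
     forall v' : V G', (v' \in Z G') = [forall v, (pi v == v') ==> (v \in Z G)]).

Definition isolated n (G : stree n) (W : {set V G}) (v : V G) : bool :=
  [forall u, iadj v u ==> (u \notin W)].

Definition half_equiv n (Z1 Z2 : assignment n) : Prop :=
  forall (G : stree n) (v : V G), v \in Z1 G :\: Z2 G ->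
    deg v = 3 /\ isolated (Z1 G :\: Z2 G) v.

Definition ext_equiv n (Z1 Z2 : assignment n) : Prop :=
  half_equiv Z1 Z2 /\ half_equiv Z2 Z1.

From mathcomp Require Import all_boot zify.
Set Implicit Arguments. Unset Strict Implicit. Unset Printing Implicit Defensive.

(* For transitivity, a vertex of
   Z1(G) \ Z3(G) lies in Z1(G) \ Z2(G) or in Z2(G) \ Z3(G), hence has degree 3.
   If two adjacent vertices x, y were in Z1(G) \ Z3(G), contract the edge xy:
   by extremality of Z1 and Z3 the merged vertex lies in Z1 \ Z3 of the
   contracted tree, so it has degree 3.  But a tree has no triangles, so the
   merged vertex has degree deg x + deg y - 2 >= 4. *)
Definition arcs (T : finType) (e : rel T) : {set T * T} := [set p | e p.1 p.2].

Lemma connect_image (T T' : finType) (e : rel T) (e' : rel T') (h : T -> T') :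
  (forall x y, e x y -> h x = h y \/ e' (h x) (h y)) ->
  forall x y, connect e x y -> connect e' (h x) (h y).
Proof.
move=> he x y /connectP [p pth ->]; elim: p x pth => [|z p IHp] x //=.
case/andP => exz pth; apply: connect_trans (IHp z pth).
by case: (he _ _ exz) => [->|?]; [exact: connect0 | exact: connect1].
Qed.

Section ConnectedRelation.
Variables (T : finType) (e : rel T).

Fixpoint ball (r : T) (k : nat) : {set T} :=
  if k is k'.+1 then ball r k' :|: [set y | [exists x in ball r k', e x y]]
  else [set r].

Lemma ball_last r p a k :
  a \in ball r k -> path e a p -> last a p \in ball r (k + size p).
Proof.
elim: p a k => [|b p IHp] a k ha /=; first by rewrite addn0.
case/andP=> eab pth; rewrite addnS -addSn; apply: IHp pth => /=.
by rewrite in_setU inE; apply/orP; right; apply/existsP; exists a; rewrite ha eab.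
Qed.

Hypothesis e_connected : forall x y, connect e x y.

Lemma exists_ball r x : exists k, x \in ball r k.
Proof.
have /connectP [p pth ->] := e_connected r x.
by exists (0 + size p); apply: ball_last; rewrite ?inE.
Qed.

Lemma exists_parent r : exists (par : T -> T) (h : T -> nat),
  forall x, x != r -> e (par x) x && (h (par x) < h x).
Proof.
pose dist x := ex_minn (exists_ball r x).
have distP x : x != r -> exists2 y, e y x & dist y < dist x.
  rewrite /dist; case: ex_minnP => [[|d] xd mind] xr.
    by move: xd xr; rewrite inE => ->.
  move: xd; rewrite /= in_setU => /orP [xd|].
    by have := mind d xd; rewrite ltnn.
  rewrite inE => /existsP [y /andP [yd eyx]]; exists y => //.
  by case: ex_minnP => d' _ mind'; exact: leq_ltn_trans (mind' d yd) _.
exists (fun x => odflt r [pick y | e y x && (dist y < dist x)]), dist.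
move=> x xr; case: pickP => [y //|noy] /=.
by have [y eyx dyx] := distP x xr; have := noy y; rewrite eyx dyx.
Qed.

Hypothesis e_sym : symmetric e.

Lemma card_arcs_ge : (#|T|.-1).*2 <= #|arcs e|.
Proof.
case: (pickP (@predT T)) => [r _|T0]; last by rewrite (eq_card0 T0).
have [par [h parP]] := exists_parent r.
pose A := [set x | x != r].
pose down := [set (par x, x) | x in A].
pose up := [set (x, par x) | x in A].
have cardA : #|A| = #|T|.-1 by rewrite -(cardsC1 r); apply: eq_card => x; rewrite !inE.
have card_down : #|down| = #|A| by apply: card_in_imset => x y _ _ [].
have card_up : #|up| = #|A| by apply: card_in_imset => x y _ _ [].
have down_up0 : down :&: up = set0.
  apply/setP => -[a b]; rewrite !inE; apply/negP.
  case/andP => /imsetP [x xA [-> ->]] /imsetP [y yA [xy yx]].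
  move: xA yA; rewrite !inE => /parP /andP [_ hx] /parP /andP [_].
  by rewrite -yx -xy => /(ltn_trans hx); rewrite ltnn.
have sub : down :|: up \subset arcs e.
  apply/subsetP => -[a b]; rewrite !inE => /orP [] /imsetP [x xA [-> ->]] /=;
    move: xA; rewrite inE => /parP /andP [exy _] //.
  by rewrite [e _ _]e_sym.
have := subset_leq_card sub.
by rewrite cardsU down_up0 cards0 subn0 card_down card_up cardA addnn.
Qed.

End ConnectedRelation.

(* Deleting one edge of a triangle keeps the graph connected, yet leaves fewer
   than 2(|T| - 1) arcs. *)
Lemma tree_triangle_free (T : finType) (e : rel T) :
  symmetric e -> (forall x, ~~ e x x) -> (forall x y, connect e x y) ->
  #|arcs e| = (#|T|.-1).*2 -> forall a b c, e a b -> e b c -> e a c -> False.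
Proof.
move=> e_sym e_irr e_conn e_arcs a b c eab ebc eac.
have nab : a != b by apply: contraTneq eab => ->; exact: e_irr.
have nbc : b != c by apply: contraTneq ebc => ->; exact: e_irr.
have nac : a != c by apply: contraTneq eac => ->; exact: e_irr.
have nba : b != a by rewrite eq_sym.
have ncb : c != b by rewrite eq_sym.
have nca : c != a by rewrite eq_sym.
pose ac := [set (a, c); (c, a)].
pose e' x y := e x y && ((x, y) \notin ac).
have e'_sym : symmetric e'.
  move=> x y; rewrite /e' e_sym !inE !xpair_eqE orbC.
  by congr (_ && ~~ (_ || _)); apply: andbC.
have e'_conn x y : connect e' x y.
  apply: connect_sub (e_conn x y) => {}x {}y exy.
  have [xy_ac|xy_ac] := boolP ((x, y) \in ac); last by apply: connect1; rewrite /e' exy.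
  move: xy_ac; rewrite !inE !xpair_eqE => /orP [] /andP [/eqP -> /eqP ->];
  apply: (connect_trans (y := b)); apply: connect1;
  rewrite /e' !inE !xpair_eqE !eqxx ?(negPf nab) ?(negPf nba) ?(negPf nbc)
    ?(negPf ncb) ?(negPf nac) ?(negPf nca) /= ?andbF ?andbT ?orbF //;
  by rewrite e_sym.
have := card_arcs_ge e'_conn e'_sym.
have -> : arcs e' = arcs e :\: ac.
  by apply/setP => -[x y]; rewrite /e' !inE /= andbC.
rewrite cardsD.
have -> : arcs e :&: ac = ac.
  apply/setIidPr/subsetP => p; rewrite !inE => /orP [] /eqP -> //=.
  by rewrite e_sym.
rewrite cards2 e_arcs xpair_eqE (negPf nac) /=.
have : 0 < #|arcs e| by apply/card_gt0P; exists (a, c); rewrite inE.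
rewrite e_arcs -!addnn; lia.
Qed.

Lemma card_vtx n k : #|vtx n k| = n + k.
Proof. by rewrite card_sum !card_ord. Qed.

Section EdgeContraction.
Variables (n : nat) (G : stree n) (u v : V G).
Hypothesis uv : iadj u v.
Local Notation m := (nint G).
Local Notation adj := (@sadj n G).

Lemma contracted_neq : u != v.
Proof. by apply: contraTneq uv => ->; exact: sadj_irr. Qed.

Lemma contracted_nint_ge2 : 2 <= m.
Proof.
have := contracted_neq; rewrite -val_eqE /=.
by have := ltn_ord u; have := ltn_ord v; lia.
Qed.

Lemma no_common_neighbour x : adj (inr u) x -> adj (inr v) x -> False.
Proof.
move=> ux vx.
exact: tree_triangle_free (@sadj_sym n G) (@sadj_irr n G)
  (@s_connected n G) (@s_edges n G) _ _ _ uv vx ux.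
Qed.

Lemma no_common_neighbour_l x : adj x (inr u) -> adj x (inr v) -> False.
Proof. by rewrite !(sadj_sym x); exact: no_common_neighbour. Qed.

(* The contracted tree has internal vertices ['I_m.-1]: [v] is sent to [u],
   and the remaining indices are renumbered by [unbump v]. *)
Definition merge_uv (j : 'I_m) : 'I_m := if j == v then u else j.

Lemma merge_uv_neq j : merge_uv j != v.
Proof. by rewrite /merge_uv; case: (eqVneq j v) => // _; exact: contracted_neq. Qed.

Lemma cidx_subproof j : unbump v (merge_uv j) < m.-1.
Proof.
have := merge_uv_neq j; rewrite -val_eqE /unbump.
by have := ltn_ord (merge_uv j); have := ltn_ord v; case: ltnP => /=; lia.
Qed.

Definition cidx (j : 'I_m) : 'I_m.-1 := Ordinal (cidx_subproof j).
Arguments cidx : simpl never.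

Lemma cidx_uv : cidx u = cidx v.
Proof. by apply: val_inj; rewrite /= /merge_uv eqxx (negPf contracted_neq). Qed.

Lemma cidx_eq a b : cidx a = cidx b ->
  a = b \/ (a = u /\ b = v) \/ (a = v /\ b = u).
Proof.
move=> /(congr1 (bump v \o val)) /=.
rewrite !unbumpK ?inE ?val_eqE ?merge_uv_neq // => /val_inj.
rewrite /merge_uv; case: (eqVneq a v) => [->|av]; case: (eqVneq b v) => [->|bv];
  by intuition.
Qed.

Lemma cidx_surj (j' : 'I_m.-1) : exists2 j, cidx j = j' & j != v.
Proof.
have bump_lt : bump v j' < m.
  by have := ltn_ord j'; have := ltn_ord v; rewrite /bump; case: leqP => /=; lia.
have bump_neq : Ordinal bump_lt != v by rewrite -val_eqE /= eq_sym neq_bump.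
exists (Ordinal bump_lt) => //.
by apply: val_inj; rewrite /= /merge_uv (negPf bump_neq) /= bumpK.
Qed.

Definition cvtx (x : vtx n m) : vtx n m.-1 :=
  match x with inl i => inl i | inr j => inr (cidx j) end.

Lemma cvtx_uv : cvtx (inr u) = cvtx (inr v).
Proof. by rewrite /= cidx_uv. Qed.

Lemma cvtx_eq x y : cvtx x = cvtx y ->
  x = y \/ (x = inr u /\ y = inr v) \/ (x = inr v /\ y = inr u).
Proof.
case: x => [i|a]; case: y => [i'|b] //=; first by case=> ->; left.
by move=> ab; have [->|[[-> ->]|[-> ->]]] := cidx_eq (inr_inj ab); intuition.
Qed.

Lemma cvtx_surj x' : exists x, cvtx x = x'.
Proof.
case: x' => [i|j']; first by exists (inl i).
by have [j <- _] := cidx_surj j'; exists (inr j).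
Qed.

Lemma cvtx_inl x i : cvtx x = inl i -> x = inl i.
Proof. by case: x => [j /= [->]|]. Qed.

Definition cadj : rel (vtx n m.-1) := fun x' y' =>
  (x' != y') && [exists x, exists y, [&& cvtx x == x', cvtx y == y' & adj x y]].

Lemma cadj_sym : symmetric cadj.
Proof.
move=> x' y'; rewrite /cadj eq_sym; congr (_ && _).
by apply/existsP/existsP => -[x /existsP [y /and3P [xx' yy' xy]]]; exists y;
  apply/existsP; exists x; rewrite xx' yy' sadj_sym.
Qed.

Lemma cadj_irr x : ~~ cadj x x.
Proof. by rewrite /cadj eqxx. Qed.

Lemma cadj_cvtx x y : adj x y ->
  ~ (x = inr u /\ y = inr v) -> ~ (x = inr v /\ y = inr u) -> cadj (cvtx x) (cvtx y).
Proof.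
move=> xy not_uv not_vu; apply/andP; split.
  apply/eqP => /cvtx_eq [exy|[//|//]].
  by move: xy; rewrite exy (negPf (sadj_irr _)).
by apply/existsP; exists x; apply/existsP; exists y; rewrite !eqxx xy.
Qed.

Lemma cadj_connected x' y' : connect cadj x' y'.
Proof.
have [x <-] := cvtx_surj x'; have [y <-] := cvtx_surj y'.
apply: connect_image (@s_connected n G x y) => a b ab.
have [/andP [/eqP -> /eqP ->]|not_uv] := boolP ((a == inr u) && (b == inr v)).
  by left; exact: cvtx_uv.
have [/andP [/eqP -> /eqP ->]|not_vu] := boolP ((a == inr v) && (b == inr u)).
  by left; symmetry; exact: cvtx_uv.
by right; apply: cadj_cvtx => // -[ea eb]; [move: not_uv | move: not_vu];
  rewrite ea eb !eqxx.
Qed.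

Lemma cadj_arcs : #|arcs cadj| = (#|vtx n m.-1|).-1.*2.
Proof.
pose uv_arcs : {set vtx n m * vtx n m} := [set (inr u, inr v); (inr v, inr u)].
pose cpair (p : vtx n m * vtx n m) := (cvtx p.1, cvtx p.2).
have card_rest : #|arcs adj :\: uv_arcs| = #|arcs adj| - 2.
  rewrite cardsD.
  have -> : arcs adj :&: uv_arcs = uv_arcs.
    apply/setIidPr/subsetP => p; rewrite !inE => /orP [] /eqP -> //=.
    by rewrite sadj_sym.
  by rewrite cards2 xpair_eqE (inj_eq inr_inj) (negPf contracted_neq).
have cadj_image : arcs cadj = cpair @: (arcs adj :\: uv_arcs).
  apply/setP => -[x' y']; rewrite inE /=; apply/idP/imsetP.
    case/andP => ne /existsP [x /existsP [y /and3P [/eqP xx' /eqP yy' xy]]].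
    exists (x, y); last by rewrite /cpair /= xx' yy'.
    rewrite !inE /= xy andbT !xpair_eqE; apply/negP => /orP [] /andP [/eqP ex /eqP ey];
      by move: ne; rewrite -xx' -yy' ex ey cvtx_uv eqxx.
  case=> -[x y]; rewrite !inE /= !xpair_eqE => /andP [not_uv xy] [-> ->].
  by apply: cadj_cvtx => // -[ex ey]; move: not_uv; rewrite ex ey !eqxx ?orbT.
have cpair_inj : {in arcs adj :\: uv_arcs &, injective cpair}.
  move=> [x y] [x' y']; rewrite !inE /= !xpair_eqE.
  move=> /andP [not_uv xy] /andP [not_uv' xy'] [e1 e2].
  have irr := @sadj_irr n G.
  case: (cvtx_eq e1) => [E1|[[E1 E1']|[E1 E1']]];
  case: (cvtx_eq e2) => [E2|[[E2 E2']|[E2 E2']]]; subst => //; exfalso;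
    by [ move: not_uv; rewrite !eqxx | move: not_uv'; rewrite !eqxx
       | move: xy; rewrite (negPf (irr _)) | move: xy'; rewrite (negPf (irr _))
       | exact: no_common_neighbour_l xy xy' | exact: no_common_neighbour_l xy' xy
       | exact: no_common_neighbour xy xy' | exact: no_common_neighbour xy' xy ].
rewrite cadj_image (card_in_imset cpair_inj) card_rest (@s_edges n G) !card_vtx.
by have := contracted_nint_ge2; rewrite -!addnn; lia.
Qed.

Lemma cadj_leaf_deg (i : 'I_n) : #|[set y | cadj (inl i) y]| = 1.
Proof.
have /eqP /cards1P [y0 leaf_nbrs] := @s_leaf_deg n G i.
have iy0 : adj (inl i) y0 by have := set11 y0; rewrite -leaf_nbrs inE.
suff -> : [set y | cadj (inl i) y] = [set cvtx y0] by exact: cards1.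
apply/setP => y'; rewrite !inE; apply/idP/eqP.
  case/andP => _ /existsP [x /existsP [y /and3P [/eqP /cvtx_inl ix /eqP <- xy]]].
  have : y \in [set y | adj (inl i) y] by rewrite inE -ix.
  by rewrite leaf_nbrs inE => /eqP ->.
by move=> ->; apply: (@cadj_cvtx (inl i)) => // -[].
Qed.

Lemma cvtx_inj_off_uv x y : x \notin [set inr u; inr v] -> cvtx x = cvtx y -> x = y.
Proof.
rewrite !inE => x_off /cvtx_eq [//|[[ex _]|[ex _]]];
  by move: x_off; rewrite ex eqxx ?orbT.
Qed.

Lemma cadj_merged_deg : 4 <= #|[set y | cadj (inr (cidx u)) y]|.
Proof.
pose Nu := [set y | adj (inr u) y].
pose Nv := [set y | adj (inr v) y].
pose S := (Nu :|: Nv) :\: [set inr u; inr v].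
have cvtx_inj : {in S &, injective cvtx}.
  by move=> x y; rewrite inE => /andP [x_off _] _; exact: cvtx_inj_off_uv.
have sub : cvtx @: S \subset [set y | cadj (inr (cidx u)) y].
  apply/subsetP => y' /imsetP [x xS ->]; rewrite inE.
  move: xS; rewrite !inE negb_or => /andP [/andP [xu xv] /orP [ux|vx]].
    by apply: (@cadj_cvtx (inr u)) => // -[_ ex]; move: xu xv; rewrite ex eqxx.
  rewrite cidx_uv.
  by apply: (@cadj_cvtx (inr v)) => // -[_ ex]; move: xu xv; rewrite ex eqxx.
apply: leq_trans (subset_leq_card sub); rewrite (card_in_imset cvtx_inj).
have Nuv0 : Nu :&: Nv = set0.
  apply/setP => x; rewrite !inE; apply/negP => /andP [ux vx].
  exact: no_common_neighbour ux vx.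
have card_Nu : 3 <= #|Nu| := @s_int_deg n G u.
have card_Nv : 3 <= #|Nv| := @s_int_deg n G v.
have card_uv : #|(Nu :|: Nv) :&: [set inr u; inr v]| <= 2.
  by apply: leq_trans (subset_leq_card (subsetIr _ _)) _; rewrite cards2; case: (_ != _).
by move: card_uv; rewrite /S cardsD cardsU Nuv0 cards0 subn0; lia.
Qed.

Lemma cadj_int_deg (j' : 'I_m.-1) : 3 <= #|[set y | cadj (inr j') y]|.
Proof.
have [->|j'u] := eqVneq j' (cidx u); first exact: leq_trans _ cadj_merged_deg.
have [j ej' jv] := cidx_surj j'; subst j'.
have ju : j != u by apply: contraNneq j'u => ->.
pose Nj := [set y | adj (inr j) y].
have cvtx_inj : {in Nj &, injective cvtx}.
  move=> x y; rewrite !inE => jx jy /cvtx_eq [//|[[ex ey]|[ex ey]]]; exfalso.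
    by move: jx jy; rewrite ex ey; exact: no_common_neighbour_l.
  by move: jx jy; rewrite ex ey => jv' ju'; exact: no_common_neighbour_l ju' jv'.
have sub : cvtx @: Nj \subset [set y | cadj (inr (cidx j)) y].
  apply/subsetP => y' /imsetP [x jx ->]; rewrite inE; move: jx; rewrite inE => jx.
  apply: (@cadj_cvtx (inr j)) => // -[[ej] _];
    by [rewrite ej eqxx in ju | rewrite ej eqxx in jv].
apply: leq_trans (subset_leq_card sub); rewrite (card_in_imset cvtx_inj).
exact: (@s_int_deg n G j).
Qed.

Definition edge_contraction : stree n :=
  @STree n m.-1 cadj cadj_sym cadj_irr cadj_connected cadj_arcs cadj_leaf_deg
    cadj_int_deg.

Lemma edge_contraction_contraction : @contraction n G edge_contraction cidx.
Proof.
split.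
- by move=> j'; have [j <- _] := cidx_surj j'; exists j.
- move=> a b /cidx_eq [->|[[-> ->]|[-> ->]]]; first exact: connect0.
    by apply: connect1; rewrite uv cidx_uv !eqxx.
  by apply: connect1; rewrite /iadj sadj_sym cidx_uv !eqxx !andbT; exact: uv.
- by [].
Qed.

Lemma mem_extremal_contracted (Z : assignment n) : extremal Z ->
  ((cidx u : V edge_contraction) \in Z edge_contraction) = (u \in Z G) && (v \in Z G).
Proof.
case=> _ Z_contr; rewrite (Z_contr _ _ _ edge_contraction_contraction).
apply/forallP/andP => [Z_fibre | [Zu Zv] a].
  by split; [have := Z_fibre u | have := Z_fibre v]; rewrite -?cidx_uv eqxx.
by apply/implyP => /eqP /cidx_eq [->|[[-> _]|[-> _]]].
Qed.

Lemma edge_contraction_merged_deg : 4 <= deg (cidx u : V edge_contraction).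
Proof. exact: cadj_merged_deg. Qed.

End EdgeContraction.

Lemma half_equiv_refl n (Z : assignment n) : half_equiv Z Z.
Proof. by move=> G v; rewrite setDv inE. Qed.

Lemma half_equiv_trans n (A B C : assignment n) : extremal A -> extremal C ->
  half_equiv A B -> half_equiv B C -> half_equiv A C.
Proof.
move=> A_ext C_ext AB BC.
have deg3 (G : stree n) (x : V G) : x \in A G :\: C G -> deg x = 3.
  rewrite inE => /andP [xNC xA]; have [xB|xNB] := boolP (x \in B G).
    by case: (BC G x); rewrite // inE xB xNC.
  by case: (AB G x); rewrite // inE xNB xA.
move=> G x xAC; split; first exact: deg3.
apply/forallP => y; apply/implyP => xy; apply/negP => yAC.
have := deg3 _ (cidx xy x : V (edge_contraction xy)).
rewrite !inE !mem_extremal_contracted //.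
move: xAC yAC; rewrite !inE => /andP [xNC xA] /andP [yNC yA].
rewrite xA yA (negPf xNC) /= => /(_ isT) deg_xy.
by have := edge_contraction_merged_deg xy; rewrite deg_xy.
Qed.

Theorem mainTheorem1 (n : nat) (hn : 3 <= n) :
  (forall Z : assignment n, extremal Z -> ext_equiv Z Z) /\
  (forall Z1 Z2 : assignment n, extremal Z1 -> extremal Z2 ->
     ext_equiv Z1 Z2 -> ext_equiv Z2 Z1) /\
  (forall Z1 Z2 Z3 : assignment n, extremal Z1 -> extremal Z2 -> extremal Z3 ->
     ext_equiv Z1 Z2 -> ext_equiv Z2 Z3 -> ext_equiv Z1 Z3).
Proof.
split; [|split].
- by move=> Z _; split; exact: half_equiv_refl.
- by move=> Z1 Z2 _ _ [].
- move=> Z1 Z2 Z3 Z1_ext _ Z3_ext [Z12 Z21] [Z23 Z32]; split.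
    exact: half_equiv_trans Z1_ext Z3_ext Z12 Z23.
  exact: half_equiv_trans Z3_ext Z1_ext Z32 Z21.
Qed.
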